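(* Let $L$ be a factorial R-lattice of type I admitting a regular equivalence relation $\sim$, and let $\{l_i\}$ be a family of mutually orthogonal minimal elements of $L$ which is maximal with respect to these two properties. Then $\bigvee_i l_i=1$.
   Context: Orthocomplemented lattice (paper's convention): a set $L$ with a partial order $\le$ in which every subset has a supremum and an infimum ($l\vee l'$, $l\wedge l'$ denote binary sup/inf, $0=\inf L$, $1=\sup L$), such that: (continuity) for every increasing net $(l_i)$ and every $l$, $\bigvee_i(l\wedge l_i)=l\wedge\bigvee_i l_i$, and for every decreasing net $(l_i)$ and every $l$, $\bigwedge_i(l\vee l_i)=l\vee\bigwedge_i l_i$; (modularity) $l\le l''$ implies $(l\vee l')\wedge l''=l\vee(l'\wedge l'')$ for all $l'$; together with a map $l\mapsto l^\perp$, also written $1-l$, satisfying $l^{\perp\perp}=l$, $l\vee l^\perp=1$, $l\wedge l^\perp=0$, and $l\le l'\Rightarrow l'^\perp\le l^\perp$. For $l'\le l$ put $l-l'=(1-l')\wedge l$. Write $\perp(l)=\{l'\in L: l'\le 1-l\}$; elements of $\perp(l)$ are orthogonal to $l$; a family is mutually orthogonal if any two distinct members are orthogonal. $l$ commutes with $l'$ if $l=(l\wedge l')\vee(l\wedge l'^\perp)$; $c(l)$ is the set of elements commuting with $l$; $C(L)=\bigcap_{l\in L}c(l)$. $L$ is factorial if $C(L)=\{0,1\}$ and abelian if $C(L)=L$. For $l\in L$, $L\wedge l=\{l'\in L:l'\le l\}$ is an orthocomplemented lattice with complement $l'\mapsto l-l'$; $l$ is an abelian element if $L\wedge l$ is abelian.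 A factorial lattice is of type I if it has at least one nonzero abelian element. $L$ is an R-lattice if $C(L\wedge l)=\{c\wedge l: c\in C(L)\}$ for every $l\in L$. An element $l\ne 0$ is minimal if for every $l'\in L$ either $l\wedge l'=0$ or $l\wedge l'=l$; $Min(L)$ is the set of minimal elements and $Min(l)=\{m\in Min(L): m\le l\}$. Regular equivalence relation: for an equivalence relation $\sim$ on $L$ write $l\le_\sim l'$ if there is $l''\le l'$ with $l\sim l''$. $\sim$ is regular if: (1) $l\sim 0\iff l=0$; (2) $l\ge l'$ and $l\le_\sim l'$ imply $l\sim l'$; (3) for all $l,l'$, $l\le_\sim l'$ or $l'\le_\sim l$; (4) if $(l_i)$, $(l_i')$ are families of mutually orthogonal elements with $l_i\sim l_i'$ for all $i$, then $\bigvee_i l_i\sim\bigvee_i l_i'$; (5) $l'\le l$ and $l'\sim l$ imply $l'=l$. *)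

Set Implicit Arguments.

Record OrthoLattice := {
  carrier :> Type;
  le : carrier -> carrier -> Prop;
  sup : (carrier -> Prop) -> carrier;
  inf : (carrier -> Prop) -> carrier;
  compl : carrier -> carrier;
  le_refl : forall x, le x x;
  le_trans : forall x y z, le x y -> le y z -> le x z;
  le_antisym : forall x y, le x y -> le y x -> x = y;
  sup_ub : forall (S : carrier -> Prop) x, S x -> le x (sup S);
  sup_least : forall (S : carrier -> Prop) u, (forall x, S x -> le x u) -> le (sup S) u;
  inf_lb : forall (S : carrier -> Prop) x, S x -> le (inf S) x;
  inf_greatest : forall (S : carrier -> Prop) u, (forall x, S x -> le u x) -> le u (inf S);
  cont_incr : forall (I : Type) (r : I -> I -> Prop) (f : I -> carrier) (l : carrier),
      (forall i, r i i) -> (forall i j k, r i j -> r j k -> r i k) ->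
      (forall i j, exists k, r i k /\ r j k) ->
      (forall i j, r i j -> le (f i) (f j)) ->
      sup (fun x => exists i, x = inf (fun y => y = l \/ y = f i)) =
      inf (fun y => y = l \/ y = sup (fun x => exists i, x = f i));
  cont_decr : forall (I : Type) (r : I -> I -> Prop) (f : I -> carrier) (l : carrier),
      (forall i, r i i) -> (forall i j k, r i j -> r j k -> r i k) ->
      (forall i j, exists k, r i k /\ r j k) ->
      (forall i j, r i j -> le (f j) (f i)) ->
      inf (fun x => exists i, x = sup (fun y => y = l \/ y = f i)) =
      sup (fun y => y = l \/ y = inf (fun x => exists i, x = f i));
  modular : forall a b c, le a c ->
      inf (fun y => y = sup (fun z => z = a \/ z = b) \/ y = c) =
      sup (fun y => y = a \/ y = inf (fun z => z = b \/ z = c));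
  compl_invol : forall x, compl (compl x) = x;
  compl_join : forall x, sup (fun y => y = x \/ y = compl x) = sup (fun _ => True);
  compl_meet : forall x, inf (fun y => y = x \/ y = compl x) = inf (fun _ => True);
  compl_anti : forall x y, le x y -> le (compl y) (compl x)
}.

Section Defs.
Variable L : OrthoLattice.

Definition meet (a b : L) : L := inf L (fun y => y = a \/ y = b).
Definition join (a b : L) : L := sup L (fun y => y = a \/ y = b).
Definition bot : L := inf L (fun _ => True).
Definition top : L := sup L (fun _ => True).

Definition orth (l l' : L) : Prop := le L l' (compl L l).

Definition ldiff (l l' : L) : L := meet (compl L l') l.

Definition commutes (l l' : L) : Prop :=
  l = join (meet l l') (meet l (compl L l')).

Definition center (x : L) : Prop := forall l, commutes x l.

Definition factorial : Prop := forall x, center x <-> (x = bot \/ x = top).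

(** commutation inside L /\ l (complement l' |-> l - l'); binary meets and
    joins in L /\ l coincide with those of L. *)
Definition commutes_in (l a b : L) : Prop :=
  a = join (meet a b) (meet a (ldiff l b)).

Definition center_in (l a : L) : Prop :=
  le L a l /\ forall b, le L b l -> commutes_in l a b.

Definition abelian_elem (l : L) : Prop :=
  forall a, le L a l -> center_in l a.

Definition typeI : Prop := factorial /\ exists l, l <> bot /\ abelian_elem l.

Definition R_lattice : Prop :=
  forall l a, center_in l a <-> exists c, center c /\ a = meet c l.

Definition minimal (l : L) : Prop :=
  l <> bot /\ forall l', meet l l' = bot \/ meet l l' = l.

Definition lesim (R : L -> L -> Prop) (a b : L) : Prop :=
  exists c, le L c b /\ R a c.

Definition regular_equiv (R : L -> L -> Prop) : Prop :=
  (forall x, R x x) /\ (forall x y, R x y -> R y x) /\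
  (forall x y z, R x y -> R y z -> R x z) /\
  (forall x, R x bot <-> x = bot) /\
  (forall x y, le L y x -> lesim R x y -> R x y) /\
  (forall x y, lesim R x y \/ lesim R y x) /\
  (forall (I : Type) (f g : I -> L),
      (forall i j, i <> j -> orth (f i) (f j)) ->
      (forall i j, i <> j -> orth (g i) (g j)) ->
      (forall i, R (f i) (g i)) ->
      R (sup L (fun x => exists i, x = f i)) (sup L (fun x => exists i, x = g i))) /\
  (forall x y, le L y x -> R y x -> y = x).

Definition orth_minimal_family (S : L -> Prop) : Prop :=
  (forall x, S x -> minimal x) /\
  (forall x y, S x -> S y -> x <> y -> orth x y).

Definition maximal_orth_minimal_family (S : L -> Prop) : Prop :=
  orth_minimal_family S /\
  forall S' : L -> Prop, orth_minimal_family S' ->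
    (forall x, S x -> S' x) -> forall x, S' x -> S x.

End Defs.

Arguments regular_equiv {L} R.
Arguments maximal_orth_minimal_family {L} S.
Arguments orth_minimal_family {L} S.

(** Let [S] be a maximal family of mutually orthogonal minimal elements and
    [s] its supremum.  The proof has three ingredients:
    - in a factorial R-lattice, a nonzero abelian element [a] is minimal: every
      [z <= a] is central in [L /\ a], hence of the form [c /\ a] with [c]
      central in [L], i.e. [c = 0] or [c = 1];
    - a regular equivalence transports minimality ([y ~ m] with [m] minimal
      forces [y] minimal), and comparability of [x] with the minimal [a] then
      shows that every nonzero [x] lies above some minimal element;
    - a minimal element orthogonal to [s] can be added to [S], so by
      maximality it already lies in [S], hence below [s] and [1 - s].
    If [s <> 1] then [1 - s <> 0] lies above a minimal [m]; by the last point
    [m <= s /\ (1 - s) = 0], contradicting minimality of [m]. *)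

From Stdlib Require Import Classical.
Local Arguments meet {L}.
Local Arguments orth {L}.
Local Arguments minimal {L}.
Local Arguments abelian_elem {L}.

Section LatticeFacts.
Variable L : OrthoLattice.

Lemma bot_le (x : L) : le L (bot L) x.
Proof. apply inf_lb; exact I. Qed.

Lemma meet_le_l (a b : L) : le L (meet a b) a.
Proof. apply inf_lb; auto. Qed.

Lemma meet_le_r (a b : L) : le L (meet a b) b.
Proof. apply inf_lb; auto. Qed.

Lemma le_meet (x a b : L) : le L x a -> le L x b -> le L x (meet a b).
Proof. intros; apply inf_greatest; intros y [-> | ->]; auto. Qed.

Lemma meet_le_eq (a b : L) : le L b a -> meet a b = b.
Proof.
  intro Hba. apply le_antisym; [apply meet_le_r | apply le_meet; auto using le_refl].
Qed.

Lemma meet_bot (a : L) : meet (bot L) a = bot L.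
Proof. apply le_antisym; [apply meet_le_l | apply bot_le]. Qed.

Lemma meet_top (a : L) : meet (top L) a = a.
Proof. apply meet_le_eq, sup_ub; exact I. Qed.

Lemma le_compl_both (x z : L) : le L z x -> le L z (compl L x) -> z = bot L.
Proof.
  intros Hx Hcx. apply le_antisym; [|apply bot_le].
  unfold bot; rewrite <- (compl_meet L x). apply le_meet; auto.
Qed.

Lemma compl_eq_bot (s : L) : compl L s = bot L -> s = top L.
Proof.
  intro E. rewrite <- (compl_invol L s), E. unfold top; rewrite <- (compl_join L (bot L)).
  apply le_antisym.
  - apply sup_ub; auto.
  - apply sup_least; intros y [-> | ->]; [apply bot_le | apply le_refl].
Qed.

Lemma minimalP (m : L) :
  minimal m <-> m <> bot L /\ forall z, le L z m -> z = bot L \/ z = m.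
Proof.
  split.
  - intros [Hm Hmin]; split; auto. intros z Hz.
    rewrite <- (meet_le_eq _ _ Hz). apply Hmin.
  - intros [Hm Hbelow]; split; auto. intro z. apply Hbelow, meet_le_l.
Qed.

End LatticeFacts.

Lemma abelian_minimal (L : OrthoLattice) (a : L) :
  factorial L -> R_lattice L -> a <> bot L -> abelian_elem a -> minimal a.
Proof.
  intros Hfac HR Ha0 Hab. apply minimalP; split; auto.
  intros z Hz. destruct (proj1 (HR a z) (Hab z Hz)) as [c [Hc ->]].
  destruct (proj1 (Hfac c) Hc) as [-> | ->]; [left; apply meet_bot | right; apply meet_top].
Qed.

Section RegularEquivalence.
Variable L : OrthoLattice.
Variable R : L -> L -> Prop.
Hypothesis HR : regular_equiv R.

Lemma minimal_transfer (m y : L) : minimal m -> R y m -> minimal y.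
Proof.
  destruct HR as (_ & Hsym & Htr & Hzero & Hsub & Hcmp & _ & Hfin).
  intros Hm Hym. apply minimalP in Hm as [Hm0 Hbelow].
  apply minimalP; split.
  - intros ->. apply Hm0, Hzero, Hsym, Hym.
  - intros z Hz. destruct (classic (z = bot L)) as [Hz0 | Hz0]; [now left | right].
    destruct (Hcmp z m) as [[w [Hw Hzw]] | [w [Hwz Hmw]]].
    + (* z is equivalent to a part w of m, necessarily w = m, so z ~ y *)
      destruct (Hbelow w Hw) as [-> | ->].
      * exfalso; apply Hz0, Hzero, Hzw.
      * apply Hfin; [exact Hz | apply Htr with m; auto].
    + (* m, hence y, is equivalent to some w <= z <= y, so w = y = z *)
      assert (Hwy : w = y) by (apply Hfin; [apply le_trans with z | apply Htr with m]; auto).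
      subst w. apply le_antisym; auto.
Qed.

Lemma minimal_below (a x : L) :
  minimal a -> x <> bot L -> exists m, minimal m /\ le L m x.
Proof.
  destruct HR as (_ & Hsym & _ & Hzero & _ & Hcmp & _).
  intros Ha Hx. pose proof Ha as Ha'. apply minimalP in Ha' as [_ Hbelow].
  destruct (Hcmp x a) as [[w [Hw Hxw]] | [w [Hw Haw]]].
  - exists x; split; [|apply le_refl].
    destruct (Hbelow w Hw) as [-> | ->].
    + exfalso; apply Hx, Hzero, Hxw.
    + apply minimal_transfer with a; auto.
  - exists w; split; auto. apply minimal_transfer with a; auto.
Qed.

End RegularEquivalence.

Arguments minimal_below {L R} HR {a x}.

Lemma maximal_family_absorbs (L : OrthoLattice) (S : L -> Prop) (m : L) :
  maximal_orth_minimal_family S -> minimal m -> le L m (compl L (sup L S)) -> S m.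
Proof.
  intros [[Smin Sorth] Smax] Hm Hms.
  assert (HS : forall x, S x -> le L x (sup L S)) by (intros; apply sup_ub; auto).
  apply (Smax (fun x => S x \/ x = m)); auto.
  split.
  - intros x [Hx | ->]; auto.
  - intros x y [Hx | ->] [Hy | ->] Hne; [apply Sorth; auto | unfold orth .. | contradiction].
    + apply le_trans with (compl L (sup L S)); auto. apply compl_anti; auto.
    + apply le_trans with (sup L S); auto.
      rewrite <- (compl_invol L (sup L S)). apply compl_anti; auto.
Qed.

Theorem mainTheorem7 (L : OrthoLattice) :
  factorial L -> R_lattice L -> typeI L ->
  (exists R : L -> L -> Prop, regular_equiv R) ->
  forall S : L -> Prop, maximal_orth_minimal_family S ->
  sup L S = top L.
Proof.
  intros Hfac HRl [_ [a [Ha0 Hab]]] [R HR] S HS.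
  assert (Ha : minimal a) by (apply abelian_minimal; auto).
  destruct (classic (sup L S = top L)) as [Htop | Hntop]; auto. exfalso.
  assert (Hc0 : compl L (sup L S) <> bot L) by (intro E; apply Hntop, compl_eq_bot, E).
  destruct (minimal_below HR Ha Hc0) as [m [Hm Hmc]].
  assert (HSm : S m) by (apply maximal_family_absorbs; auto).
  apply (proj1 Hm), (le_compl_both L (sup L S)); auto.
  apply sup_ub; exact HSm.
Qed.
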